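(* Let $n\in\mathbb N$, $r>0$, and let $\gamma_1,\gamma_2:[-r,r]\to\mathbb R^m$ be continuous. Let $\epsilon\ne0$ with $n|\epsilon|<r$. Define, for $\gamma\in\{\gamma_1,\gamma_2\}$, $$v_n(\gamma,\epsilon)=\epsilon^{-1}\sum_{k=-n}^n p_{nk}\,\gamma(k\epsilon),$$ where $p_{n0}=0$ and $p_{nk}=\frac{(-1)^{k+1}(n!)^2}{k(n+k)!(n-k)!}$ for $1\le|k|\le n$. Then $$\bigl|v_n(\gamma_2,\epsilon)-v_n(\gamma_1,\epsilon)\bigr|\le |\epsilon|^{-1}H_n\,\|\gamma_2-\gamma_1\|,$$ where $\|\cdot\|$ is the supremum norm on $[-r,r]$ and $H_n=\sum_{k=1}^n k^{-1}$. *)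

From HB Require Import structures.
From mathcomp Require Import all_boot all_order all_algebra.
From mathcomp Require Import all_classical all_reals all_analysis.
Set Implicit Arguments. Unset Strict Implicit. Unset Printing Implicit Defensive.
Import Order.TTheory GRing.Theory Num.Theory.
Import numFieldNormedType.Exports.
Local Open Scope classical_set_scope.
Local Open Scope ring_scope.

(* p_{nk}: p_{n0} = 0, p_{nk} = (-1)^{k+1} (n!)^2 / (k (n+k)! (n-k)!) for k <> 0.
   (n+k) and (n-k) are converted to nat by absz; they are >= 0 when |k| <= n. *)
Definition pcoef (R : realType) (n : nat) (k : int) : R :=
  if k == 0 then 0
  else ((-1) ^ (k + 1) * ((n`!) ^ 2)%:R) /
       (k%:~R * ((absz (n%:Z + k))`!)%:R * ((absz (n%:Z - k))`!)%:R).

Definition vn (R : realType) (m n : nat) (gamma : R -> 'rV[R]_m) (eps : R)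
  : 'rV[R]_m :=
  eps^-1 *: \sum_(i < (2 * n).+1)
     pcoef R n (i%:Z - n%:Z) *: gamma ((i%:Z - n%:Z)%:~R * eps).

Definition supnorm (R : realType) (m : nat) (r : R) (f : R -> 'rV[R]_m) : R :=
  sup [set `|f t| | t in `[- r, r]].

Definition harmonic_number (R : realType) (n : nat) : R :=
  \sum_(1 <= k < n.+1) (k%:R)^-1.

(* The difference v_n(gamma2, eps) - v_n(gamma1, eps) equals
   eps^-1 * sum_k p(n,k) (gamma2 - gamma1)(k eps), and every node k eps lies
   in [-r, r]; the triangle inequality bounds it by
   |eps|^-1 * (sum_k |p(n,k)|) * ||gamma2 - gamma1||, so it remains to show
   sum_k |p(n,k)| = H_n.  With b(n,k) = (n!)^2 / ((n+k)! (n-k)!) we have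
   |p(n,k)| = |p(n,-k)| = b(n,k) / k, and 2 sum_(k=1..n) b(n,k) / k = H_n
   follows by induction on n from
     b(n+1,k) / k = b(n,k) / k + k b(n+1,k) / (n+1)^2
   and the telescoping identity 2 sum_(k=1..n) k b(n,k) = n. *)

From HB Require Import structures.
From mathcomp Require Import all_boot all_order all_algebra.
From mathcomp Require Import all_classical all_reals all_analysis.
From mathcomp Require Import ring zify.
Import Order.TTheory GRing.Theory Num.Theory.
Import numFieldNormedType.Exports.
Local Open Scope classical_set_scope.
Local Open Scope ring_scope.

Section FactRatio.
Variable R : numFieldType.

Definition fact_ratio (N k : nat) : R :=
  (N`! ^ 2)%:R / ((N + k)`!%:R * (N - k)`!%:R).

Lemma natr_fact_neq0 n : n`!%:R != 0 :> R.
Proof. by rewrite pnatr_eq0 -lt0n fact_gt0. Qed.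

Lemma fact_ratioS N k : (k < N)%N ->
  fact_ratio N k * (N - k)%:R = fact_ratio N k.+1 * (N + k.+1)%:R.
Proof.
move=> ltkN; have eNk : (N - k = (N - k.+1).+1)%N by lia.
rewrite /fact_ratio addnS eNk !factS !natrM.
by field; rewrite !natr_fact_neq0 -!natrD !nat1r !pnatr_eq0.
Qed.

Lemma sum_fact_ratio_weighted N :
  (\sum_(1 <= k < N.+1) k%:R * fact_ratio N k) *+ 2 = N%:R.
Proof.
(* By [fact_ratioS], 2 k b(N,k) = (N + k) b(N,k) - (N + k + 1) b(N,k+1);
   [tail] is cut off by hand beyond [N], where [N - k] truncates to [0]. *)
pose tail k := if (k <= N)%N then (N + k)%:R * fact_ratio N k else 0.
rewrite -sumrMnl (telescope_sumr_eq (fun k => - tail k)) //; last first.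
  move=> k /andP[_]; rewrite ltnS => leKN.
  rewrite /tail leKN; case: ltnP => [ltkN|leNk].
    rewrite [_ * fact_ratio N k.+1]mulrC -fact_ratioS //.
    by rewrite natrB // natrD; ring.
  have -> : k = N by lia.
  by rewrite natrD; ring.
rewrite /tail ltnn oppr0 sub0r opprK; clear tail; case: N => [|N] //=.
rewrite /fact_ratio subSS subn0 addn1 !factS natrX !natrM.
by field; rewrite natr_fact_neq0 -!natrD !nat1r !pnatr_eq0.
Qed.

Lemma fact_ratio_succ N k : (0 < k < N.+1)%N ->
  fact_ratio N.+1 k / k%:R =
    fact_ratio N k / k%:R + k%:R * fact_ratio N.+1 k / N.+1%:R ^+ 2.
Proof.
case/andP=> k_gt0 leKN; have [j ->] : exists j, N = (k + j)%N.
  by exists (N - k)%N; lia.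
rewrite /fact_ratio addSn addKn subSn ?leq_addr // addKn.
rewrite !factS !natrX !natrM.
by field; rewrite !natr_fact_neq0 -!natrD !nat1r !pnatr_eq0 (gtn_eqF k_gt0).
Qed.

End FactRatio.

Lemma sum_fact_ratio_harmonic (R : realType) N :
  (\sum_(1 <= k < N.+1) fact_ratio R N k / k%:R) *+ 2 = harmonic_number R N.
Proof.
elim: N => [|N IH]; first by rewrite /harmonic_number !big_geq ?mul0rn.
have hw := sum_fact_ratio_weighted R N.+1; rewrite big_nat_recr //= in hw.
rewrite /harmonic_number [RHS]big_nat_recr //= -/(harmonic_number R N) -IH.
rewrite big_nat_recr //= (eq_big_nat _ _ (@fact_ratio_succ R N)).
rewrite big_split /= -mulr_suml.
set S := \sum_(1 <= i < N.+1) _ / _; set A := \sum_(1 <= i < N.+1) _ * _.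
set B := fact_ratio R N.+1 N.+1.
have {hw}eA : A *+ 2 = N.+1%:R - (N.+1%:R * B) *+ 2.
  by apply: (canRL (addrK _)); rewrite -mulrnDl.
rewrite !mulrnDl -mulrnAl eA.
by field; rewrite nat1r pnatr_eq0.
Qed.

Lemma normr_sign_exprz (R : numDomainType) (z : int) : `|(-1) ^ z : R| = 1.
Proof. by rewrite expN1r normrX normrN1 expr1n. Qed.

Lemma pcoef0 (R : realType) n : pcoef R n 0 = 0.
Proof. by rewrite /pcoef eqxx. Qed.

Lemma normr_pcoefN (R : realType) n (k : int) :
  `|pcoef R n (- k)| = `|pcoef R n k|.
Proof.
rewrite /pcoef oppr_eq0; case: eqP => // _.
rewrite opprK !normrM !normfV !normrM !normr_sign_exprz mulrNz normrN.
by rewrite [`|k%:~R| * _ * _]mulrAC.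
Qed.

Lemma normr_pcoef (R : realType) n k : (0 < k <= n)%N ->
  `|pcoef R n k%:Z| = fact_ratio R n k / k%:R.
Proof.
case/andP=> k_gt0 leKn; rewrite /pcoef eqz_nat (gtn_eqF k_gt0) /=.
rewrite -PoszD subzn // !absz_nat normrM normfV !normrM normr_sign_exprz mul1r.
by rewrite pmulrn !normr_nat /fact_ratio -mulrA invfM mulrCA mulrC.
Qed.

Lemma sum_ord_centered (V : nmodType) n (F : int -> V) :
  \sum_(i < (2 * n).+1) F (i%:Z - n%:Z) =
    F 0 + \sum_(0 <= k < n) (F k.+1%:Z + F (- k.+1%:Z)).
Proof.
rewrite -(big_mkord xpredT (fun i => F (i%:Z - n%:Z))).
rewrite (@big_cat_nat _ _ _ n) ?leqW ?leq_pmull //= big_nat_rev /= add0n.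
rewrite -[X in \sum_(X <= i < (2 * n).+1) _]add0n big_addn.
rewrite (_ : (2 * n).+1 - n = n.+1)%N; last by lia.
rewrite big_nat_recl //= add0n subrr big_split /= [LHS]addrC [RHS]addrA.
congr (_ + _ + _); apply: eq_big_nat => k /andP[_ ltkn].
  by rewrite PoszD addrK.
by rewrite -subzn // addrAC subrr add0r.
Qed.

Lemma sum_normr_pcoef (R : realType) n :
  \sum_(i < (2 * n).+1) `|pcoef R n (i%:Z - n%:Z)| = harmonic_number R n.
Proof.
rewrite (@sum_ord_centered _ n (fun k => `|pcoef R n k|)) pcoef0 normr0 add0r.
rewrite -sum_fact_ratio_harmonic -sumrMnl big_add1 /=.
apply: eq_big_nat => k /andP[_ ltkn].
by rewrite normr_pcoefN normr_pcoef // mulr2n.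
Qed.

Lemma normr_le_supnorm {R : realType} {m} {r} {f : R -> 'rV[R]_m} {t} :
  {within `[- r, r], continuous f} -> t \in `[- r, r] -> `|f t| <= supnorm r f.
Proof.
move=> cf rt; apply: sup_upper_bound; last by exists t.
split; first by exists `|f t|, t.
have := continuous_compact cf (@segment_compact R (- r) r).
move=> /compact_bounded[M [_ leM]].
exists (M + 1) => _ [s rs <-]; apply: (leM (M + 1)); first by rewrite ltrDl.
by exists s.
Qed.

Lemma node_in_segment {R : realDomainType} {n} {r eps : R} (i : 'I_(2 * n).+1) :
  n%:R * `|eps| <= r -> (i%:Z - n%:Z)%:~R * eps \in `[- r, r].
Proof.
move=> le_nr; rewrite in_itv /= -ler_norml normrM (le_trans _ le_nr) //.
rewrite ler_wpM2r //.
have : `|i%:Z - n%:Z| <= n%:Z by rewrite ler_norml; have := ltn_ord i; lia.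
by rewrite -intr_norm -[n%:R]/((n%:Z)%:~R) ler_int.
Qed.

Theorem mainTheorem3 (R : realType) (m n : nat) (r : R)
  (gamma1 gamma2 : R -> 'rV[R]_m) (eps : R) :
  0 < r ->
  {within `[- r, r], continuous gamma1} ->
  {within `[- r, r], continuous gamma2} ->
  eps != 0 ->
  n%:R * `|eps| < r ->
  `|vn n gamma2 eps - vn n gamma1 eps|
    <= `|eps|^-1 * @harmonic_number R n * supnorm r (gamma2 - gamma1).
Proof.
move=> _ c1 c2 _ /ltW le_nr.
rewrite /vn -scalerBr -sumrB normrZ normfV -mulrA ler_wpM2l ?invr_ge0 //.
under eq_bigr do rewrite -scalerBr.
rewrite -sum_normr_pcoef mulr_suml (le_trans (ler_norm_sum _ _ _)) //.
apply: ler_sum => i _.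
rewrite normrZ ler_wpM2l //.
exact: normr_le_supnorm (within_continuousB c2 c1) (node_in_segment i le_nr).
Qed.
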